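(* For every partition $\lambda$ of $n$, the $\operatorname{GZ}_n$-module $1_\lambda=\operatorname{GZ}_n/I_\lambda$ is free of rank one as an $R$-module, generated by the image of $1$, and $L_i$ acts on it by multiplication by $r_\lambda(i)$.
   Context: $R$ is the localization of $\mathbb Z$ at a prime $(p)$. Jucys–Murphy elements $L_1=0$, $L_k=\sum_{j<k}(j,k)$; $\operatorname{GZ}_n$ is the $R$-subalgebra of $RS_n$ generated by $L_1,\dots,L_n$. Content $r_t(k)=j-i$ if $k$ is in node $[i,j]$ of the tableau $t$; $t^\lambda$ is the $\lambda$-tableau with $1,\dots,n$ entered in order along rows, $r_\lambda(i):=r_{t^\lambda}(i)$. $I_\lambda$ is the ideal of $\operatorname{GZ}_n$ generated by $L_i-r_\lambda(i)$, $i=1,\dots,n$. *)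

From HB Require Import structures.
From mathcomp Require Import all_boot all_order all_algebra all_fingroup.
Set Implicit Arguments. Unset Strict Implicit. Unset Printing Implicit Defensive.
Import Order.TTheory GRing.Theory Num.Theory.
Local Open Scope ring_scope.

(* R = Z_(p), realised as the subring of rat of fractions whose reduced
   denominator is prime to p. *)
Definition inR (p : nat) (q : rat) : bool := ~~ (p %| `|denq q|)%N.

(* The group algebra Q S_n, as functions S_n -> Q; RS_n sits inside it. *)
Notation galg n := {ffun {perm 'I_n} -> rat}.

Definition gdelta n (s : {perm 'I_n}) : galg n := [ffun t => (t == s)%:R].
Definition gone n : galg n := gdelta 1%g.

Definition gscale n (c : rat) (f : galg n) : galg n := [ffun s => c * f s].
(* NB: + , - , 0 on galg n are the pointwise (ffun) ones; the algebra
   product is gmul (NOT the pointwise ffun product * ). *)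

(* convolution product: gdelta s * gdelta t = gdelta (s * t)%g *)
Definition gmul n (f g : galg n) : galg n :=
  [ffun s => \sum_(t : {perm 'I_n}) f t * g (t^-1 * s)%g].

(* Jucys-Murphy elements (0-based indices): L_k = sum_{j<k} (j,k). *)
Definition JM n (k : 'I_n) : galg n :=
  \sum_(j : 'I_n | (j < k)%N) gdelta (tperm j k).

Inductive inGZ (p n : nat) : galg n -> Prop :=
| GZ_one : inGZ p (gone n)
| GZ_L (k : 'I_n) : inGZ p (JM k)
| GZ_add (x y : galg n) : inGZ p x -> inGZ p y -> inGZ p (x + y)
| GZ_mul (x y : galg n) : inGZ p x -> inGZ p y -> inGZ p (gmul x y)
| GZ_scale c (x : galg n) : inR p c -> inGZ p x -> inGZ p (gscale c x).

Definition is_partition (n : nat) (la : seq nat) : bool :=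
  [&& sorted geq la, all (fun a => 0 < a)%N la & sumn la == n].

(* (row, column), 0-based, of the entry with 0-based index k in t^lambda
   (entries filled in order along rows). *)
Fixpoint tab_pos (la : seq nat) (k : nat) : nat * nat :=
  match la with
  | [::] => (0%N, 0%N)
  | a :: la' => if (k < a)%N then (0%N, k)
                else let ij := tab_pos la' (k - a) in (ij.1.+1, ij.2)
  end.

Definition content (la : seq nat) (k : nat) : rat :=
  ((tab_pos la k).2%:Z - (tab_pos la k).1%:Z)%:~R.

Inductive inI (p n : nat) (la : seq nat) : galg n -> Prop :=
| I_gen (k : 'I_n) : inI p la (JM k - gscale (content la k) (gone n))
| I_zero : inI p la (0 : galg n)
| I_add (x y : galg n) : inI p la x -> inI p la y -> inI p la (x + y)
| I_mull (a x : galg n) : inGZ p a -> inI p la x -> inI p la (gmul a x)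
| I_mulr (a x : galg n) : inGZ p a -> inI p la x -> inI p la (gmul x a).

From HB Require Import structures.
From mathcomp Require Import all_boot all_order all_algebra all_fingroup.
From mathcomp Require Import ring lra zify.
Set Implicit Arguments. Unset Strict Implicit. Unset Printing Implicit Defensive.
Import Order.TTheory GRing.Theory Num.Theory.
Local Open Scope ring_scope.

(* Spanning is formal: every generator L_k of GZ_n is congruent to the scalar
   r_lambda(k) modulo I_lambda, and congruence to an R-multiple of 1 is stable
   under the algebra operations because R is a subring of Q.  The action of L_k
   is L_k x - r_lambda(k) x = (L_k - r_lambda(k)) x, which lies in I_lambda.

   Freeness needs a witness that I_lambda is proper: the Young symmetrizer
   v = x_R y_C of t^lambda (row symmetrizer times column antisymmetrizer) is an
   eigenvector of every L_k with eigenvalue the content r_lambda(k) (Murphy).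
   Hence GZ_n acts on Q v by scalars, I_lambda annihilates v, and since the
   coefficient of the identity in v is 1, c * 1 in I_lambda forces c = 0.

   The eigenvector property: L_k v = sum_(j<k) (j k) x_R y_C.  Transpositions
   with boxes j of the row of k fix x_R and contribute (col k) v.  For a row i
   above k, the row exchange identity x_R + sum_(j in row i) (j k) x_R = sigma_T
   expresses the sum through the indicator sigma_T of a set T of permutations,
   and sigma_T y_C = 0 by a sign-reversing involution (multiply by a column
   transposition), so each such row contributes -v.  Hence
   L_k v = (col k - row k) v = r_lambda(k) v. *)

Section LocalRing.
Variable p : nat.
Hypothesis p_prime : prime p.

Lemma denq_dvd_of_mul_int (q : rat) (d z : int) :
  q * d%:~R = z%:~R -> (denq q %| d)%Z.
Proof.
move=> qdz.
have E : numq q * d = z * denq q.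
  by apply: (@intr_inj rat); rewrite !rmorphM /= numqE -qdz; ring.
have : (denq q %| numq q * d)%Z by rewrite E dvdz_mull.
by rewrite Gauss_dvdzr // coprimezE coprime_sym coprime_num_den.
Qed.

Lemma inR_of_mul_int (q : rat) (d z : int) :
  ~~ (p %| `|d|)%N -> q * d%:~R = z%:~R -> inR p q.
Proof.
move=> pNd /denq_dvd_of_mul_int den_d; apply/negP => p_den.
by move: pNd; rewrite (dvdn_trans p_den den_d).
Qed.

Lemma inR_den_mul (a b : rat) :
  inR p a -> inR p b -> ~~ (p %| `|(denq a * denq b)%R|)%N.
Proof. by move=> ha hb; rewrite abszM Euclid_dvdM // negb_or; apply/andP. Qed.

Lemma inRD (a b : rat) : inR p a -> inR p b -> inR p (a + b).
Proof.
move=> ha hb; apply: (@inR_of_mul_int _ _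
  (numq a * denq b + numq b * denq a) (inR_den_mul ha hb)).
by rewrite rmorphD !rmorphM /= !numqE; ring.
Qed.

Lemma inRM (a b : rat) : inR p a -> inR p b -> inR p (a * b).
Proof.
move=> ha hb.
apply: (@inR_of_mul_int _ _ (numq a * numq b) (inR_den_mul ha hb)).
by rewrite !rmorphM /= !numqE; ring.
Qed.

Lemma inR_int (z : int) : inR p z%:~R.
Proof. by rewrite /inR denq_int dvdn1 neq_ltn prime_gt1 ?orbT. Qed.

End LocalRing.

Section GroupAlgebra.
Variable n : nat.
Implicit Types (f g h : galg n) (c d : rat) (s t u : {perm 'I_n}).

Lemma gmulE f g s : gmul f g s = \sum_t f t * g (t^-1 * s)%g.
Proof. by rewrite ffunE. Qed.

Lemma gmulA f g h : gmul (gmul f g) h = gmul f (gmul g h).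
Proof.
apply/ffunP => s; rewrite !gmulE.
under eq_bigr do rewrite gmulE mulr_suml.
rewrite exchange_big /=; apply: eq_bigr => u _.
rewrite gmulE mulr_sumr (reindex_inj (mulgI u)) /=.
apply: eq_bigr => w _; rewrite mulKg mulrA; congr (_ * _ * h _).
by rewrite invMg mulgA.
Qed.

Lemma gmulDl f g h : gmul (f + g) h = gmul f h + gmul g h.
Proof.
apply/ffunP => s; rewrite !ffunE -big_split.
by apply: eq_bigr => t _; rewrite ffunE mulrDl.
Qed.

Lemma gmulDr f g h : gmul f (g + h) = gmul f g + gmul f h.
Proof.
apply/ffunP => s; rewrite !ffunE -big_split.
by apply: eq_bigr => t _; rewrite ffunE mulrDr.
Qed.

Lemma gmul0l g : gmul 0 g = 0.
Proof. by apply/ffunP => s; rewrite !ffunE big1 // => t _; rewrite ffunE mul0r. Qed.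

Lemma gmul0r g : gmul g 0 = 0.
Proof. by apply/ffunP => s; rewrite !ffunE big1 // => t _; rewrite ffunE mulr0. Qed.

Lemma gmulNl f g : gmul (- f) g = - gmul f g.
Proof. by apply/eqP; rewrite -subr_eq0 opprK -gmulDl addNr gmul0l. Qed.

Lemma gmulNr f g : gmul f (- g) = - gmul f g.
Proof. by apply/eqP; rewrite -subr_eq0 opprK -gmulDr addNr gmul0r. Qed.

Lemma gmulBl f g h : gmul (f - g) h = gmul f h - gmul g h.
Proof. by rewrite gmulDl gmulNl. Qed.

Lemma gmulBr f g h : gmul f (g - h) = gmul f g - gmul f h.
Proof. by rewrite gmulDr gmulNr. Qed.

Lemma gmulMnl f g m : gmul (f *+ m) g = gmul f g *+ m.
Proof. by elim: m => [|m IH]; rewrite ?mulr0n ?gmul0l // !mulrS gmulDl IH. Qed.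

Lemma gmul_suml I (r : seq I) (P : pred I) (F : I -> galg n) g :
  gmul (\sum_(i <- r | P i) F i) g = \sum_(i <- r | P i) gmul (F i) g.
Proof. by apply: (big_morph (fun f => gmul f g)) => [f h|]; [apply: gmulDl | apply: gmul0l]. Qed.

Lemma gscale_mull c f g : gmul (gscale c f) g = gscale c (gmul f g).
Proof.
apply/ffunP => s; rewrite !ffunE mulr_sumr.
by apply: eq_bigr => t _; rewrite ffunE mulrA.
Qed.

Lemma gscale_mulr c f g : gmul f (gscale c g) = gscale c (gmul f g).
Proof.
apply/ffunP => s; rewrite !ffunE mulr_sumr.
by apply: eq_bigr => t _; rewrite ffunE mulrCA.
Qed.

Lemma gdelta_mull s f : gmul (gdelta s) f = [ffun u => f (s^-1 * u)%g].
Proof.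
apply/ffunP => u; rewrite !ffunE (bigD1 s) //= big1 ?addr0.
  by rewrite ffunE eqxx mul1r.
by move=> t /negbTE ts; rewrite ffunE ts mul0r.
Qed.

Lemma gdeltaM s t : gmul (gdelta s) (gdelta t) = gdelta (s * t)%g.
Proof.
rewrite gdelta_mull; apply/ffunP => u; rewrite !ffunE.
by congr (GRing.natmul 1 (nat_of_bool _)); apply/eqP/eqP => [<-|->]; rewrite ?mulKVg ?mulKg.
Qed.

Lemma gone_mull f : gmul (gone n) f = f.
Proof. by rewrite /gone gdelta_mull; apply/ffunP => u; rewrite ffunE invg1 mul1g. Qed.

Lemma gone_mulr f : gmul f (gone n) = f.
Proof.
apply/ffunP => u; rewrite !ffunE (bigD1 u) //= big1 ?addr0.
  by rewrite ffunE mulVg eqxx mulr1.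
move=> t tu; rewrite ffunE; case: eqP => [/eqP|]; last by rewrite mulr0.
by rewrite -eq_mulVg1 => /eqP tu'; rewrite tu' eqxx in tu.
Qed.

Lemma gscaleD c d f : gscale (c + d) f = gscale c f + gscale d f.
Proof. by apply/ffunP => s; rewrite !ffunE mulrDl. Qed.

Lemma gscaleM c d f : gscale (c * d) f = gscale c (gscale d f).
Proof. by apply/ffunP => s; rewrite !ffunE mulrA. Qed.

Lemma gscale1 f : gscale 1 f = f.
Proof. by apply/ffunP => s; rewrite !ffunE mul1r. Qed.

Lemma gscale0r c : gscale c 0 = 0 :> galg n.
Proof. by apply/ffunP => s; rewrite !ffunE mulr0. Qed.

Lemma gscale_natrB f (r c : nat) : - f *+ r + f *+ c = gscale (c%:R - r%:R) f.
Proof.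
apply/ffunP => u; rewrite ffunE !ffunMnE !ffunE.
by rewrite -[f u *+ c]mulr_natl -[- f u *+ r]mulr_natl mulrBl mulrN addrC.
Qed.

End GroupAlgebra.

(* Young symmetrizers of an abstract diagram: box b : 'I_n sits in row
   [row b] and column [col b]. *)
Section YoungSymmetrizer.
Variables (n : nat) (row col : 'I_n -> nat).
Local Notation perm := {perm 'I_n}.

Definition stab (f : 'I_n -> nat) : {set perm} :=
  [set s : perm | [forall b, f (s b) == f b]].
Definition row_group : {set perm} := stab row.
Definition col_group : {set perm} := stab col.

Definition psign (s : perm) : rat := (-1) ^+ odd_perm s.
Definition indicator (A : {set perm}) : galg n := \sum_(s in A) gdelta s.

Definition row_sym : galg n := indicator row_group.
Definition col_antisym : galg n :=
  \sum_(s in col_group) gscale (psign s) (gdelta s).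
Definition young_sym : galg n := gmul row_sym col_antisym.

Lemma stabP f (s : perm) : reflect (forall b, f (s b) = f b) (s \in stab f).
Proof. by rewrite inE; apply: (iffP forallP) => H b; apply/eqP. Qed.

Lemma stab1 f : (1%g : perm) \in stab f.
Proof. by apply/stabP => b; rewrite perm1. Qed.

Lemma stab_mulV f (t u : perm) :
  t \in stab f -> ((t^-1 * u)%g \in stab f) = (u \in stab f).
Proof.
move=> /stabP ft; apply/stabP/stabP => fu b.
  by have := fu (t b); rewrite permM permK => ->; apply: ft.
by rewrite permM fu -{2}(permKV t b) ft.
Qed.

Lemma indicatorE A (s : perm) : indicator A s = (s \in A)%:R.
Proof.
rewrite /indicator sum_ffunE; case: (boolP (s \in A)) => sA.
  rewrite (bigD1 s) //= big1 ?addr0; first by rewrite ffunE eqxx.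
  by move=> t /andP [_ ts]; rewrite ffunE eq_sym (negbTE ts).
by rewrite big1 // => t tA; rewrite ffunE; case: eqP => // ts; rewrite ts tA in sA.
Qed.

Lemma col_antisymE (s : perm) : col_antisym s = (s \in col_group)%:R * psign s.
Proof.
rewrite /col_antisym sum_ffunE; case: (boolP (s \in col_group)) => sC.
  rewrite (bigD1 s) //= big1 ?addr0; first by rewrite !ffunE eqxx mulr1 mul1r.
  by move=> t /andP [_ ts]; rewrite !ffunE eq_sym (negbTE ts) mulr0.
rewrite big1 ?mul0r // => t tC; rewrite !ffunE; case: eqP; last by rewrite mulr0.
by move=> ts; rewrite ts tC in sC.
Qed.

Lemma row_sym_absorb (t : perm) : t \in row_group -> gmul (gdelta t) row_sym = row_sym.
Proof.
move=> tR; rewrite gdelta_mull; apply/ffunP => u.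
by rewrite ffunE !indicatorE stab_mulV.
Qed.

Lemma col_antisym_swap (a m : 'I_n) :
  a != m -> col a = col m -> gmul (gdelta (tperm a m)) col_antisym = - col_antisym.
Proof.
move=> am cam; have tC : tperm a m \in col_group.
  by apply/stabP => b; case: (tpermP a m b) => [->|->|].
rewrite gdelta_mull; apply/ffunP => u; rewrite !ffunE !col_antisymE stab_mulV //.
rewrite /psign tpermV odd_mul_tperm am addTb.
by case: (u \in col_group); rewrite ?mul0r ?oppr0 // !mul1r; case: odd_perm.
Qed.

(* If boxes are determined by their row and column, row and column groups
   meet trivially, so the identity occurs in the Young symmetrizer with
   coefficient 1. *)
Lemma young_sym1 :
  (forall a b, row a = row b -> col a = col b -> a = b) -> young_sym 1%g = 1.
Proof.
move=> box_inj; rewrite /young_sym gmulE (bigD1 1%g) //= big1 ?addr0.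
  by rewrite indicatorE col_antisymE mulg1 invg1 !stab1 /psign odd_perm1 !mul1r.
move=> t t1; rewrite indicatorE col_antisymE mulg1.
case: (boolP (t \in row_group)) => tR; last by rewrite mul0r.
case: (boolP (t^-1 \in col_group))%g => tC; last by rewrite mul0r mulr0.
suff tinv1 : (t^-1 = 1)%g by rewrite -[t]invgK tinv1 invg1 eqxx in t1.
apply/permP => b; rewrite perm1; apply: box_inj.
  by move/stabP: tR => /(_ (t^-1 b)%g); rewrite permKV.
by move/stabP: tC.
Qed.

(* Fix a box k and a row i different
   from the row of k.  [partial_row_group] is the set of permutations that
   preserve the row of every box outside row i other than k; it is a disjoint
   union of row_group and of the cosets (j k) row_group for j in row i.  When
   every box of row k has a box of row i in its column, the column
   antisymmetrizer kills the sum over [partial_row_group]. *)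
Section RowExchange.
Variables (k : 'I_n) (i : nat).
Hypothesis i_neq_row_k : i != row k.

Definition outside : {set 'I_n} := [set b : 'I_n | (row b != i) && (b != k)].
Definition partial_row_group : {set perm} :=
  [set s : perm | [forall b, (b \in outside) ==> (row (s b) == row b)]].
Local Notation T := partial_row_group.

(* For s in T, [missing s] is the unique box outside row i not hit by
   the boxes of [outside]. *)
Definition missing (s : perm) : 'I_n :=
  odflt k [pick m | (row m != i) && (m \notin s @: outside)].

Lemma partial_row_groupP (s : perm) :
  reflect (forall b, b \in outside -> row (s b) = row b) (s \in T).
Proof.
rewrite inE; apply: (iffP forallP) => sT b.
  by move=> bP; move: (sT b); rewrite bP => /eqP.
by apply/implyP => /sT ->.
Qed.

Lemma row_group_partial (s : perm) : s \in row_group -> s \in T.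
Proof. by move=> /stabP sR; apply/partial_row_groupP => b _. Qed.

Lemma outsideN (b : 'I_n) : b \notin outside -> b != k -> row b = i.
Proof. by rewrite inE negb_and !negbK => /orP [/eqP // | ->]. Qed.

Lemma missing_spec (s : perm) : s \in T ->
  [/\ row (missing s) != i, missing s \notin s @: outside &
      forall m, row m != i -> m \notin s @: outside -> m = missing s].
Proof.
move=> /partial_row_groupP sT; set W := [set b : 'I_n | row b != i].
have sPW : s @: outside \subset W.
  apply/subsetP => _ /imsetP [b bP ->]; rewrite inE sT //.
  by move: bP; rewrite inE => /andP [].
have : #|W :\: s @: outside| == 1%N.
  rewrite cardsDS // card_imset; last exact: perm_inj.
  have -> : outside = W :\ k by apply/setP => b; rewrite !inE andbC.
  have kW : k \in W by rewrite inE eq_sym.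
  by rewrite (cardsD1 k W) kW addnK.
case/cards1P => m Wm.
have m_uniq m' : row m' != i -> m' \notin s @: outside -> m' = m.
  by move=> m'i m'P; apply/set1P; rewrite -Wm inE m'P inE.
have : m \in W :\: s @: outside by rewrite Wm set11.
rewrite inE => /andP [mP]; rewrite inE => mi.
suff -> : missing s = m by [].
rewrite /missing; case: pickP => [m' /andP [m'i m'P] | none] /=; first exact: m_uniq.
by move: (none m); rewrite mi mP.
Qed.

(* The missing box lies in row k: every other row outside row i is mapped
   into itself, hence onto itself. *)
Lemma missing_row (s : perm) : s \in T -> row (missing s) = row k.
Proof.
move=> sT; have [mi mP _] := missing_spec sT; set m := missing s in mi mP *.
apply/eqP/negPn/negP => mk; move/partial_row_groupP: sT => sT.
set Q := [set b : 'I_n | row b == row m].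
have QP : Q \subset outside.
  apply/subsetP => b; rewrite !inE => /eqP rb; rewrite rb mi /=.
  by apply: contraNneq mk => bk; rewrite -rb bk.
have sQ : s @: Q = Q.
  apply/eqP; rewrite eqEcard (card_imset _ (@perm_inj _ s)) leqnn andbT.
  apply/subsetP => _ /imsetP [b bQ ->]; rewrite inE sT; last exact: (subsetP QP).
  by move: bQ; rewrite inE.
by move: mP; rewrite (subsetP (imsetS _ QP)) // sQ inE.
Qed.

Lemma partial_image_row (s : perm) (b : 'I_n) : s \in T ->
  b \notin outside -> s b != missing s -> row (s b) = i.
Proof.
move=> sT bP sbm; have [_ _ m_uniq] := missing_spec sT.
apply/eqP; apply: contraNT sbm => sbi; apply/eqP/m_uniq => //.
by apply: contra bP => /imsetP [b' b'P /perm_inj ->].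
Qed.

Lemma swap_row_group (j : 'I_n) (u : perm) : row j = i ->
  ((tperm j k * u)%g \in row_group) = (u \in T) && (u j == missing u).
Proof.
move=> rj; have jP : j \notin outside by rewrite inE rj eqxx.
have jk : j != k by apply: contraNneq i_neq_row_k => jk; rewrite -rj jk.
apply/idP/andP => [/stabP swR | [uT /eqP ujm]].
  have uT : u \in T.
    apply/partial_row_groupP => b; rewrite inE => /andP [bi bk].
    have jb : j != b by apply: contraNneq bi => <-; rewrite rj.
    by have := swR b; rewrite permM tpermD // eq_sym.
  split=> //; apply/eqP; apply: contraNeq i_neq_row_k => ujm.
  by rewrite -(partial_image_row uT jP ujm) -(swR k) permM tpermR.
apply/stabP => b; rewrite permM; case: (tpermP j k b) => [->|->|bj bk].
- rewrite rj (partial_image_row uT) ?inE ?eqxx ?andbF // -ujm.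
  by rewrite (inj_eq perm_inj) eq_sym.
- by rewrite ujm missing_row.
case: (boolP (b \in outside)) => bP; first by move/partial_row_groupP: uT; apply.
have /eqP bk' := bk; have /eqP bj' := bj.
by rewrite (outsideN bP bk') (partial_image_row uT) // -ujm (inj_eq perm_inj).
Qed.

Lemma row_group_missing (u : perm) : u \in T ->
  (u \in row_group) = (row ((u^-1)%g (missing u)) != i).
Proof.
move=> uT; set j0 := (u^-1)%g (missing u).
have uj0 : u j0 = missing u by rewrite permKV.
have [_ mP _] := missing_spec uT.
have j0P : j0 \notin outside.
  by apply: contra mP => j0P; rewrite -uj0 imset_f.
apply/idP/idP => [/stabP uR | j0i].
  by rewrite -(uR j0) uj0 missing_row // eq_sym.
have j0k : j0 = k by apply/eqP; apply: contraNT j0P => j0k; rewrite inE j0i.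
apply/stabP => b; case: (boolP (b \in outside)) => bP.
  by move/partial_row_groupP: uT; apply.
case: (eqVneq b k) => [-> | bk]; first by rewrite -{1}j0k uj0 missing_row.
by rewrite (outsideN bP bk) (partial_image_row uT) // -uj0 (inj_eq perm_inj) j0k.
Qed.

Lemma row_exchange :
  row_sym + \sum_(j | row j == i) gmul (gdelta (tperm j k)) row_sym = indicator T.
Proof.
apply/ffunP => u; rewrite ffunE {1}/row_sym !indicatorE sum_ffunE.
under eq_bigr do rewrite gdelta_mull ffunE indicatorE tpermV.
rewrite (eq_bigr (fun j => ((u \in T) && (u j == missing u))%:R)); last first.
  by move=> j /eqP rj; rewrite swap_row_group.
case: (boolP (u \in T)) => uT /=; last first.
  rewrite big1 ?addr0 //; apply/eqP; rewrite pnatr_eq0 eqb0.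
  by apply: contra uT; apply: row_group_partial.
rewrite row_group_missing //; set j0 := (u^-1)%g (missing u).
have uj_m j : (u j == missing u) = (j == j0) by rewrite -[RHS](inj_eq (@perm_inj _ u)) /j0 permKV.
under eq_bigr do rewrite uj_m.
case: (eqVneq (row j0) i) => rj0.
  rewrite (bigD1 j0) /= ?rj0 // eqxx big1 ?addr0 // => j /andP [_ jj0].
  by rewrite (negbTE jj0).
rewrite big1 ?addr0 // => j /eqP rj; case: eqP => // jj0.
by move: rj0; rewrite -jj0 rj eqxx.
Qed.

Hypothesis row_i_covers :
  forall m, row m = row k -> exists a, row a = i /\ col a = col m.

Definition partner (m : 'I_n) : 'I_n :=
  odflt m [pick a | (row a == i) && (col a == col m)].

(* Sign-reversing involution of T: swap the missing box with its partner. *)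
Definition flip (s : perm) : perm := tperm (partner (missing s)) (missing s).
Definition flip_inv (s : perm) : perm := if s \in T then (s * flip s)%g else s.

Lemma partner_spec (m : 'I_n) : row m = row k ->
  row (partner m) = i /\ col (partner m) = col m.
Proof.
move=> rm; rewrite /partner; case: pickP => [a /andP [/eqP ra /eqP ca] | none] //=.
have [a [ra ca]] := row_i_covers rm.
by move: (none a); rewrite ra ca !eqxx.
Qed.

Lemma flip_spec (s : perm) : s \in T ->
  [/\ (s * flip s)%g \in T, missing (s * flip s)%g = missing s,
      partner (missing s) != missing s & col (partner (missing s)) = col (missing s)].
Proof.
move=> sT; have [_ mP _] := missing_spec sT; have rm := missing_row sT.
have [ra ca] := partner_spec rm.
have am : partner (missing s) != missing s.
  by apply: contraNneq i_neq_row_k => am; rewrite -ra am rm.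
have flip_out b : b \in outside -> (s * flip s)%g b = s b.
  move=> bP; have /andP [bi _] : (row b != i) && (b != k) by move: bP; rewrite inE.
  have rsb : row (s b) = row b by move/partial_row_groupP: sT; apply.
  rewrite permM /flip tpermD //.
    by apply: contraNneq bi => sba; rewrite -rsb -sba ra.
  by apply: contraNneq mP => ->; apply: imset_f.
have Eim : (s * flip s)%g @: outside = s @: outside by apply: eq_in_imset.
split=> //; first by apply/partial_row_groupP => b bP; rewrite flip_out //;
  move/partial_row_groupP: sT; apply.
by rewrite /missing Eim.
Qed.

Lemma flip_invK : involutive flip_inv.
Proof.
move=> s; rewrite /flip_inv; case: (boolP (s \in T)) => sT; last by rewrite (negbTE sT).
have [sfT msf _ _] := flip_spec sT.
by rewrite sfT /flip msf -mulgA tperm2 mulg1.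
Qed.

Lemma partial_row_group_vanish : gmul (indicator T) col_antisym = 0.
Proof.
set S := gmul _ _; suff S_opp : S = - S.
  by apply/ffunP => u; have := congr1 (fun f : galg n => f u) S_opp; rewrite !ffunE; lra.
rewrite /S /indicator gmul_suml [LHS](reindex_inj (can_inj flip_invK)) /= -sumrN.
have memT s : (flip_inv s \in T) = (s \in T).
  rewrite /flip_inv; case: (boolP (s \in T)) => sT; last by rewrite (negbTE sT).
  by have [-> _ _ _] := flip_spec sT.
under eq_bigl do rewrite memT.
apply: eq_bigr => s sT; have [_ _ am ca] := flip_spec sT.
by rewrite /flip_inv sT -gdeltaM gmulA (col_antisym_swap am ca) gmulNr.
Qed.

End RowExchange.

Lemma sum_by_rows (G : 'I_n -> galg n) (r : nat) :
  \sum_(j | (row j < r)%N) G j = \sum_(i < r) \sum_(j | row j == i) G j.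
Proof.
elim: r => [|r IH]; first by rewrite big_ord0 big_pred0 // => j; rewrite ltn0.
rewrite big_ord_recr /= -IH (bigID (fun j => (row j < r)%N)) /=.
congr (_ + _); apply: eq_bigl => j; rewrite ltnS leq_eqVlt.
  by case: ltnP => h; rewrite ?orbT ?andbT // orbF andbF.
by case: ltnP => h; rewrite ?orbT ?andbF ?andbT ?orbF //; apply/esym/negbTE; rewrite neq_ltn h.
Qed.

(* The hypotheses say that boxes are
   numbered in reading order, that k has [col k] boxes to its left in its
   row, and that every row above k is at least as long as the row of k. *)
Section Eigenvector.
Variable k : 'I_n.
Hypothesis reading_order : forall j : 'I_n,
  (j < k)%N = (row j < row k)%N || ((row j == row k) && (col j < col k)%N).
Hypothesis boxes_left :
  #|[set j : 'I_n | (row j == row k) && (col j < col k)%N]| = col k.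
Hypothesis rows_above : forall i m, (i < row k)%N -> row m = row k ->
  exists a, row a = i /\ col a = col m.

Lemma same_row_swaps :
  \sum_(j : 'I_n | (j < k)%N && ~~ (row j < row k)%N) gmul (gdelta (tperm j k)) row_sym
  = row_sym *+ col k.
Proof.
rewrite -boxes_left -sumr_const; apply: eq_big => j.
  rewrite reading_order inE; case: (boolP (row j < row k)%N) => h /=; last by rewrite andbT.
  by rewrite (ltn_eqF h).
move=> /andP [jk]; rewrite -leqNgt => h.
have rj : row j = row k.
  by move: jk; rewrite reading_order ltnNge h /= => /andP [/eqP -> _].
by apply: row_sym_absorb; apply/stabP => b; case: (tpermP j k b) => [->|->|] //; rewrite rj.
Qed.

(* Each row above k contributes -1 by the row exchange relations. *)
Lemma earlier_row_swaps :
  gmul (\sum_(j | (row j < row k)%N) gmul (gdelta (tperm j k)) row_sym) col_antisym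
  = - young_sym *+ row k.
Proof.
rewrite sum_by_rows gmul_suml -[row k in RHS]card_ord -sumr_const.
apply: eq_bigr => i _; have ik : (i : nat) != row k by rewrite neq_ltn ltn_ord.
have -> : \sum_(j | row j == i) gmul (gdelta (tperm j k)) row_sym
    = indicator (partial_row_group k i) - row_sym.
  by rewrite -(row_exchange ik) addrC addKr.
rewrite gmulBl (partial_row_group_vanish ik) ?sub0r //.
by move=> m; apply: rows_above (ltn_ord i).
Qed.

Lemma JM_young_sym :
  gmul (JM k) young_sym = gscale ((col k)%:R - (row k)%:R) young_sym.
Proof.
rewrite /young_sym -gmulA /JM gmul_suml (bigID (fun j => (row j < row k)%N)) /=.
have earlier : \sum_(j : 'I_n | (j < k)%N && (row j < row k)%N) gmul (gdelta (tperm j k)) row_sym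
    = \sum_(j | (row j < row k)%N) gmul (gdelta (tperm j k)) row_sym.
  by apply: eq_bigl => j; rewrite reading_order; case: (boolP (row j < row k)%N) => h; rewrite ?andbT ?andbF.
rewrite earlier same_row_swaps gmulDl earlier_row_swaps gmulMnl.
by rewrite -/young_sym gscale_natrB.
Qed.

End Eigenvector.

End YoungSymmetrizer.

(* The row-reading tableau t^lambda: entry k (0-based) sits at
   [tab_pos la k], and conversely the box (r, c) holds entry
   [sumn (take r la) + c]. *)
Local Close Scope ring_scope.

Lemma tab_posK la k : k < sumn la ->
  [/\ (tab_pos la k).1 < size la, (tab_pos la k).2 < nth 0 la (tab_pos la k).1
    & k = sumn (take (tab_pos la k).1 la) + (tab_pos la k).2].
Proof.
elim: la k => [|a l IH] k //= hk; case: ifP => [// | /negbT]; rewrite -leqNgt => ak.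
by have [] := IH (k - a) ltac:(lia); split=> //=; lia.
Qed.

Lemma tab_pos_entry la r c : r < size la -> c < nth 0 la r ->
  tab_pos la (sumn (take r la) + c) = (r, c).
Proof.
elim: la r => [|a l IH] [|r] //= hr hc; first by rewrite add0n hc.
rewrite ifF; last lia.
by rewrite (_ : a + sumn (take r l) + c - a = sumn (take r l) + c) ?IH //; lia.
Qed.

Lemma sumn_take_row_lt la r r' : r < r' ->
  sumn (take r la) + nth 0 la r <= sumn (take r' la).
Proof.
elim: la r r' => [|a l IH] [|r] [|r'] //=; try lia.
by move=> h; have := IH r r' h; lia.
Qed.

Lemma sumn_take_row_le la r : sumn (take r la) + nth 0 la r <= sumn la.
Proof.
case: (ltnP r (size la)) => h; last by rewrite nth_default // take_oversize // addn0.
by have := sumn_take_row_lt la h; rewrite take_size.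
Qed.

Local Open Scope ring_scope.

Section RowTableau.
Variables (n : nat) (la : seq nat).
Hypothesis la_sum : sumn la = n.
Hypothesis la_sorted : sorted geq la.

Definition tab_row (k : 'I_n) : nat := (tab_pos la k).1.
Definition tab_col (k : 'I_n) : nat := (tab_pos la k).2.

Lemma tab_box (k : 'I_n) : [/\ (tab_row k < size la)%N,
  (tab_col k < nth 0 la (tab_row k))%N & (k : nat) = (sumn (take (tab_row k) la) + tab_col k)%N].
Proof. by apply: tab_posK; rewrite la_sum. Qed.

Lemma tab_box_inj (a b : 'I_n) : tab_row a = tab_row b -> tab_col a = tab_col b -> a = b.
Proof.
move=> r c; have [_ _ ea] := tab_box a; have [_ _ eb] := tab_box b.
by apply: val_inj; rewrite /= ea eb r c.
Qed.

Lemma tab_reading_order (j k : 'I_n) : (j < k)%N =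
  (tab_row j < tab_row k)%N || ((tab_row j == tab_row k) && (tab_col j < tab_col k)%N).
Proof.
have [r1 c1 e1] := tab_box j; have [r2 c2 e2] := tab_box k.
case: (ltngtP (tab_row j) (tab_row k)) => h /=.
- by have := sumn_take_row_lt la h; lia.
- by have := sumn_take_row_lt la h; lia.
- by rewrite e1 e2 h ltn_add2l.
Qed.

Lemma tab_boxes_left (k : 'I_n) :
  #|[set j : 'I_n | (tab_row j == tab_row k) && (tab_col j < tab_col k)%N]| = tab_col k.
Proof.
have [r2 c2 e2] := tab_box k; set S := sumn (take (tab_row k) la).
have lt c : (c < tab_col k)%N -> (S + c < n)%N.
  by move=> ck; have := sumn_take_row_le la (tab_row k); rewrite la_sum; lia.
pose f (c : 'I_(tab_col k)) := Ordinal (lt c (ltn_ord c)).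
have finj : injective f by move=> a b /(congr1 val) /= /addnI /val_inj.
rewrite -[RHS]card_ord -cardsT -(card_imset _ finj).
apply: eq_card => j; rewrite inE; apply/idP/imsetP.
  move=> /andP [/eqP rj cj]; exists (Ordinal cj); first by rewrite inE.
  by apply: val_inj => /=; have [_ _ ->] := tab_box j; rewrite rj.
move=> [c _ ->]; have := tab_pos_entry r2 (ltn_trans (ltn_ord c) c2).
by rewrite /tab_row /tab_col /= => ->; rewrite eqxx /=.
Qed.

Lemma tab_rows_above (k : 'I_n) i (m : 'I_n) : (i < tab_row k)%N ->
  tab_row m = tab_row k -> exists a, tab_row a = i /\ tab_col a = tab_col m.
Proof.
move=> ik rm; have [r1 c1 _] := tab_box m.
have isz : (i < size la)%N by apply: ltn_trans ik _; rewrite -rm.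
have ci : (tab_col m < nth 0 la i)%N.
  have geq_trans : transitive geq by move=> a b c /= ba cb; apply: leq_trans cb ba.
  have := sorted_leq_nth geq_trans (fun a => leqnn a) 0 la_sorted => nth_mono.
  apply: leq_trans c1 _; rewrite rm; apply: (nth_mono i (tab_row k)) => //.
  - by rewrite unfold_in /= -rm.
  - exact: ltnW.
have lt : (sumn (take i la) + tab_col m < n)%N.
  by have := sumn_take_row_le la i; rewrite la_sum; lia.
by exists (Ordinal lt); rewrite /tab_row /tab_col /= tab_pos_entry.
Qed.

Lemma contentE (k : 'I_n) : content la k = (tab_col k)%:R - (tab_row k)%:R.
Proof. by rewrite /content rmorphB. Qed.

Lemma JM_young_sym_content (k : 'I_n) :
  gmul (JM k) (young_sym tab_row tab_col) = gscale (content la k) (young_sym tab_row tab_col).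
Proof.
rewrite contentE; apply: JM_young_sym.
- by move=> j; apply: tab_reading_order.
- exact: tab_boxes_left.
- by move=> i m; apply: tab_rows_above.
Qed.

End RowTableau.

Lemma GZ_scalar_mod_I (p n : nat) (la : seq nat) (x : galg n) : prime p ->
  inGZ p x -> exists2 c, inR p c & inI p la (x - gscale c (gone n)).
Proof.
move=> p_prime; have inR1 : inR p 1 by have := inR_int p_prime 1.
have scalar_GZ c : inR p c -> inGZ p (gscale c (gone n)).
  by move=> hc; apply: GZ_scale (GZ_one _ _).
elim => {x}.
- by exists 1 => //; rewrite gscale1 subrr; apply: I_zero.
- by move=> k; exists (content la k); [apply: (inR_int p_prime) | apply: I_gen].
- move=> x y _ [c hc Ix] _ [d hd Iy]; exists (c + d); first exact: inRD.
  by rewrite gscaleD opprD addrACA; apply: I_add.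
- move=> x y Gx [c hc Ix] Gy [d hd Iy]; exists (d * c); first exact: inRM.
  have -> : gmul x y - gscale (d * c) (gone n) =
      gmul x (y - gscale d (gone n)) + gmul (gscale d (gone n)) (x - gscale c (gone n)).
    rewrite !gmulBr gscale_mulr gone_mulr !gscale_mull !gone_mull -gscaleM.
    by rewrite addrA subrK.
  by apply: I_add; apply: I_mull => //; apply: scalar_GZ.
- move=> c x hc Gx [d hd Ix]; exists (c * d); first exact: inRM.
  have -> : gscale c x - gscale (c * d) (gone n) =
      gmul (gscale c (gone n)) (x - gscale d (gone n)).
    by rewrite gmulBr !gscale_mull !gone_mull -gscaleM.
  by apply: I_mull => //; apply: scalar_GZ.
Qed.

Lemma JM_act_mod_I (p n : nat) (la : seq nat) (k : 'I_n) (x : galg n) :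
  inGZ p x -> inI p la (gmul (JM k) x - gscale (content la k) x).
Proof.
move=> Gx; have -> : gmul (JM k) x - gscale (content la k) x =
    gmul (JM k - gscale (content la k) (gone n)) x.
  by rewrite gmulBl gscale_mull gone_mull.
by apply: I_mulr => //; apply: I_gen.
Qed.

Section ContentEigenvector.
Variables (p n : nat) (la : seq nat) (v : galg n).
Hypothesis v_eigen : forall k : 'I_n, gmul (JM k) v = gscale (content la k) v.

Lemma GZ_acts_by_scalar (x : galg n) : inGZ p x -> exists d, gmul x v = gscale d v.
Proof.
elim => {x}.
- by exists 1; rewrite gone_mull gscale1.
- by move=> k; exists (content la k); apply: v_eigen.
- move=> x y _ [c xv] _ [d yv]; exists (c + d).
  by rewrite gmulDl xv yv gscaleD.
- move=> x y _ [c xv] _ [d yv]; exists (d * c).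
  by rewrite gmulA yv gscale_mulr xv gscaleM.
- move=> c x _ _ [d xv]; exists (c * d).
  by rewrite gscale_mull xv gscaleM.
Qed.

Lemma I_annihilates (x : galg n) : inI p la x -> gmul x v = 0.
Proof.
elim => {x}.
- by move=> k; rewrite gmulBl v_eigen gscale_mull gone_mull subrr.
- exact: gmul0l.
- by move=> x y _ xv _ yv; rewrite gmulDl xv yv addr0.
- by move=> a x _ _ xv; rewrite gmulA xv gmul0r.
- move=> a x Ga _ xv; have [d av] := GZ_acts_by_scalar Ga.
  by rewrite gmulA av gscale_mulr xv gscale0r.
Qed.

End ContentEigenvector.

(* I_lambda contains no nonzero multiple of 1: it annihilates the Young
   symmetrizer of t^lambda, whose coefficient at the identity is 1. *)
Lemma I_scalar_free (p n : nat) (la : seq nat) (c : rat) : is_partition n la ->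
  inI p la (gscale c (gone n)) -> c = 0.
Proof.
move=> /and3P [la_sorted _ /eqP la_sum] cI.
have v_eigen := JM_young_sym_content la_sum la_sorted.
have := I_annihilates v_eigen cI; rewrite gscale_mull gone_mull => cv0.
have v1 : young_sym (tab_row (n:=n) la) (tab_col la) 1%g = 1.
  exact: young_sym1 (tab_box_inj la_sum).
by have := congr1 (fun f : galg n => f 1%g) cv0; rewrite /= ffunE v1 mulr1 ffunE.
Qed.

Theorem mainTheorem12 (p n : nat) (la : seq nat) :
  prime p -> is_partition n la ->
  (* 1_lambda = GZ_n / I_lambda is spanned over R by the image of 1 ... *)
  (forall x, inGZ p x -> exists2 c, inR p c & inI p la (x - gscale c (gone n))) /\
  (* ... freely: c * 1 in I_lambda with c in R forces c = 0 ... *)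
  (forall c, inR p c -> inI p la (gscale c (gone n)) -> c = 0) /\
  (* ... and L_k acts on it by multiplication by r_lambda(k). *)
  (forall (k : 'I_n) x, inGZ p x ->
     inI p la (gmul (JM k) x - gscale (content la k) x)).
Proof.
move=> p_prime la_part; split; [|split].
- by move=> x; apply: GZ_scalar_mod_I.
- by move=> c _; apply: I_scalar_free.
- by move=> k x; apply: JM_act_mod_I.
Qed.
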